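(* Every continuous valuation on Johnstone's dcpo $\mathcal J$ (with its Scott topology) is point-continuous.
   Context: Johnstone's dcpo: $\mathcal J=\mathbb N\times(\mathbb N\cup\{\infty\})$ ordered by $(a,b)\le(c,d)$ iff either ($a=c$ and $b\le d$) or ($d=\infty$ and $b\le c$). A continuous valuation is a map $\nu:\mathcal OX\to[0,\infty]$ with $\nu(\emptyset)=0$, monotone, modular, and preserving directed suprema of opens. It is point-continuous if for every open $U$ and every real $r$ with $0\le r<\nu(U)$ there is a finite $A\subseteq U$ such that $\nu(V)>r$ for every open $V\supseteq A$. *)

From Stdlib Require Import Reals List.
From Coquelicot Require Import Rbar.
Open Scope R_scope.

Definition directed_set {X : Type} (le : X -> X -> Prop) (D : X -> Prop) : Prop :=
  (exists x, D x) /\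
  (forall x y, D x -> D y -> exists z, D z /\ le x z /\ le y z).

Definition is_sup {X : Type} (le : X -> X -> Prop) (D : X -> Prop) (s : X) : Prop :=
  (forall d, D d -> le d s) /\
  (forall u, (forall d, D d -> le d u) -> le s u).

Definition scott_open {X : Type} (le : X -> X -> Prop) (U : X -> Prop) : Prop :=
  (forall x y, U x -> le x y -> U y) /\
  (forall D s, directed_set le D -> is_sup le D s -> U s -> exists d, D d /\ U d).

Inductive ninf : Type := Fin (n : nat) | Inf.

Definition ninf_le (b d : ninf) : Prop :=
  match b, d with
  | _, Inf => True
  | Fin m, Fin n => (m <= n)%nat
  | Inf, Fin _ => False
  end.

Definition ninf_le_nat (b : ninf) (c : nat) : Prop :=
  match b with Fin m => (m <= c)%nat | Inf => False end.

Definition J : Type := (nat * ninf)%type.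

Definition J_le (p q : J) : Prop :=
  let (a, b) := p in let (c, d) := q in
  (a = c /\ ninf_le b d) \/ (d = Inf /\ ninf_le_nat b c).

Definition set_union {X : Type} (U V : X -> Prop) : X -> Prop := fun x => U x \/ V x.
Definition set_inter {X : Type} (U V : X -> Prop) : X -> Prop := fun x => U x /\ V x.
Definition set_sub {X : Type} (U V : X -> Prop) : Prop := forall x, U x -> V x.

Definition directed_open_family {X : Type} (isopen : (X -> Prop) -> Prop)
  (F : (X -> Prop) -> Prop) : Prop :=
  (forall U, F U -> isopen U) /\ directed_set set_sub F.

Definition family_union {X : Type} (F : (X -> Prop) -> Prop) : X -> Prop :=
  fun x => exists U, F U /\ U x.

Definition continuous_valuation {X : Type} (isopen : (X -> Prop) -> Prop)
  (nu : (X -> Prop) -> Rbar) : Prop :=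
  (forall U, isopen U -> Rbar_le (Finite 0) (nu U)) /\
  nu (fun _ => False) = Finite 0 /\
  (forall U V, isopen U -> isopen V -> set_sub U V -> Rbar_le (nu U) (nu V)) /\
  (forall U V, isopen U -> isopen V ->
     Rbar_plus (nu U) (nu V) = Rbar_plus (nu (set_union U V)) (nu (set_inter U V))) /\
  (forall F, directed_open_family isopen F ->
     (forall U, F U -> Rbar_le (nu U) (nu (family_union F))) /\
     (forall b : Rbar, (forall U, F U -> Rbar_le (nu U) b) ->
        Rbar_le (nu (family_union F)) b)).

Definition point_continuous {X : Type} (isopen : (X -> Prop) -> Prop)
  (nu : (X -> Prop) -> Rbar) : Prop :=
  forall U (r : R), isopen U -> 0 <= r -> Rbar_lt (Finite r) (nu U) ->
    exists A : list X, (forall x, In x A -> U x) /\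
      forall V, isopen V -> (forall x, In x A -> V x) -> Rbar_lt (Finite r) (nu V).

From Stdlib Require Import Reals List Classical Lra Lia.
From Coquelicot Require Import Rbar.

(* The Scott-open subsets of J are the upper sets U such that (c,oo) in U
   forces (c,n) in U for some n.  Hence every nonempty open set contains
   (c,oo) for all large c, and any two nonempty open sets meet.

   Given r < nu(U), choose eps > 0 with r + eps < nu(U) and a nonempty open W
   whose measure w is within eps of the infimum of nu over nonempty open sets
   (if nu is infinite on all of them, any single point of U will do).  If W
   contains (a,N), then W together with the up-closure of a finite A in U is
   open as soon as A contains a witness (c,n) in U for each c < N with (c,oo)
   in U; these sets form a directed family covering U, so one of them has
   measure > r + eps.  For any open V containing A, V meets W, and modularity
   gives nu(V) + w = nu(V u W) + nu(V n W) > (r + eps) + (w - eps). *)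

Lemma Rbar_lt_gap (r : R) (u : Rbar) :
  Rbar_lt (Finite r) u -> exists eps, 0 < eps /\ Rbar_lt (Finite (r + eps)) u.
Proof.
  destruct u as [u| |]; simpl; intros Hr.
  - exists ((u - r) / 2); split; lra.
  - exists 1; split; [lra|exact I].
  - contradiction.
Qed.

Lemma exists_near_inf {T : Type} (P : T -> Prop) (f : T -> Rbar) (eps : R) :
  0 < eps -> (forall x, P x -> Rbar_le (Finite 0) (f x)) ->
  (exists x, P x /\ f x <> p_infty) ->
  exists x w, P x /\ f x = Finite w /\
    forall y, P y -> Rbar_le (Finite (w - eps)) (f y).
Proof.
  intros Heps Hf0 [x0 [Px0 Hx0]].
  set (E := fun v : R => exists x, P x /\ f x = Finite (- v)).
  assert (HE0 : forall v, E v -> v <= 0).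
  { intros v [x [Px Hx]]. specialize (Hf0 x Px). rewrite Hx in Hf0. simpl in Hf0. lra. }
  assert (HEx0 : exists v, E v).
  { specialize (Hf0 x0 Px0).
    destruct (f x0) as [w0| |] eqn:Hw0; [|contradiction|contradiction].
    exists (- w0), x0. rewrite Hw0, Ropp_involutive. auto. }
  destruct (completeness E (ex_intro _ 0 HE0) HEx0) as [m [Hub Hleast]].
  (* [- m] is the infimum of the finite values of [f] on [P]. *)
  assert (Hclose : exists x w, P x /\ f x = Finite w /\ w < - m + eps).
  { apply NNPP; intro Hnone.
    assert (Hub' : is_upper_bound E (m - eps)).
    { intros v [x [Px Hx]]. apply Rnot_lt_le; intro Hv.
      apply Hnone. exists x, (- v). repeat split; [exact Px|exact Hx|lra]. }
    specialize (Hleast _ Hub'). lra. }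
  destruct Hclose as [x [w [Px [Hx Hw]]]].
  exists x, w. repeat split; [exact Px|exact Hx|].
  intros y Py. specialize (Hf0 y Py).
  destruct (f y) as [v| |] eqn:Hv; simpl in *; [|exact I|contradiction].
  assert (HEv : E (- v)) by (exists y; rewrite Hv, Ropp_involutive; auto).
  specialize (Hub _ HEv). lra.
Qed.

Section ScottOpen.
Context {X : Type} (le : X -> X -> Prop).

Lemma scott_open_empty : scott_open le (fun _ => False).
Proof. split; [tauto|]. intros D s _ _ []. Qed.

Lemma scott_open_union U V :
  scott_open le U -> scott_open le V -> scott_open le (set_union U V).
Proof.
  intros [HUup HUsc] [HVup HVsc]; split.
  - intros x y [Ux|Vx] Hxy; [left; eauto|right; eauto].
  - intros D s HD Hs [Us|Vs].
    + destruct (HUsc D s HD Hs Us) as [d [Dd Ud]]. exists d; split; [exact Dd|left; exact Ud].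
    + destruct (HVsc D s HD Hs Vs) as [d [Dd Vd]]. exists d; split; [exact Dd|right; exact Vd].
Qed.

Lemma scott_open_inter U V :
  scott_open le U -> scott_open le V -> scott_open le (set_inter U V).
Proof.
  intros [HUup HUsc] [HVup HVsc]; split.
  - intros x y [Ux Vx] Hxy; split; eauto.
  - intros D s HD Hs [Us Vs].
    destruct (HUsc D s HD Hs Us) as [d1 [Dd1 Ud1]], (HVsc D s HD Hs Vs) as [d2 [Dd2 Vd2]].
    destruct (proj2 HD d1 d2 Dd1 Dd2) as [z [Dz [H1z H2z]]].
    exists z; split; [exact Dz|split; eauto].
Qed.

Lemma scott_open_family_union F :
  (forall U, F U -> scott_open le U) -> scott_open le (family_union F).
Proof.
  intros HF; split.
  - intros x y [U [FU Ux]] Hxy. exists U; split; [exact FU|exact (proj1 (HF U FU) x y Ux Hxy)].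
  - intros D s HD Hs [U [FU Us]].
    destruct (proj2 (HF U FU) D s HD Hs Us) as [d [Dd Ud]].
    exists d; split; [exact Dd|exists U; auto].
Qed.

Definition upset (L : list X) : X -> Prop := fun x => exists y, In y L /\ le y x.

Lemma upset_incl L L' : incl L L' -> set_sub (upset L) (upset L').
Proof. intros HL x [y [Hy Hyx]]. exists y; auto. Qed.

Lemma upset_sub L V :
  (forall x y, V x -> le x y -> V y) -> (forall y, In y L -> V y) -> set_sub (upset L) V.
Proof. intros HV HL x [y [Hy Hyx]]. exact (HV y x (HL y Hy) Hyx). Qed.

Section Valuation.
Variable nu : (X -> Prop) -> Rbar.
Hypothesis Hnu : continuous_valuation (scott_open le) nu.

Lemma valuation_ge0 U : scott_open le U -> Rbar_le (Finite 0) (nu U).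
Proof. exact (proj1 Hnu U). Qed.

Lemma valuation_mono U V :
  scott_open le U -> scott_open le V -> set_sub U V -> Rbar_le (nu U) (nu V).
Proof. exact (proj1 (proj2 (proj2 Hnu)) U V). Qed.

Lemma valuation_modular U V :
  scott_open le U -> scott_open le V ->
  Rbar_plus (nu U) (nu V) = Rbar_plus (nu (set_union U V)) (nu (set_inter U V)).
Proof. exact (proj1 (proj2 (proj2 (proj2 Hnu))) U V). Qed.

Lemma valuation_directed_sup_le F (b : Rbar) :
  directed_open_family (scott_open le) F ->
  (forall U, F U -> Rbar_le (nu U) b) -> Rbar_le (nu (family_union F)) b.
Proof. intros HF. exact (proj2 (proj2 (proj2 (proj2 (proj2 Hnu))) F HF) b). Qed.

Lemma valuation_pos_nonempty U :
  scott_open le U -> Rbar_lt (Finite 0) (nu U) -> exists x, U x.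
Proof.
  intros HU Hpos. apply NNPP; intro Hempty.
  assert (Hle : Rbar_le (nu U) (nu (fun _ => False))).
  { apply valuation_mono; [exact HU|exact scott_open_empty|].
    intros x Ux; apply Hempty; eauto. }
  rewrite (proj1 (proj2 Hnu)) in Hle. exact (Rbar_lt_not_le _ _ Hpos Hle).
Qed.

Lemma valuation_approx_by_lists (U : X -> Prop) (O : list X -> X -> Prop) (r : R) :
  scott_open le U ->
  (forall L, (forall y, In y L -> U y) -> scott_open le (O L)) ->
  (forall L L', incl L L' -> set_sub (O L) (O L')) ->
  (forall x, U x -> O (x :: nil) x) ->
  Rbar_lt (Finite r) (nu U) ->
  exists L, (forall y, In y L -> U y) /\ Rbar_lt (Finite r) (nu (O L)).
Proof.
  intros HU HO Hmono Hcover Hr.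
  set (F := fun V => exists L, (forall y, In y L -> U y) /\ V = O L).
  assert (HF : directed_open_family (scott_open le) F).
  { split; [intros V [L [HL ->]]; exact (HO L HL)|]. split.
    - exists (O nil), nil. split; [intros y []|reflexivity].
    - intros V1 V2 [L1 [HL1 ->]] [L2 [HL2 ->]]. exists (O (L1 ++ L2)). split.
      + exists (L1 ++ L2). split; [|reflexivity].
        intros y Hy. apply in_app_or in Hy as [Hy|Hy]; auto.
      + split; apply Hmono; [apply incl_appl|apply incl_appr]; apply incl_refl. }
  assert (HUF : Rbar_le (nu U) (nu (family_union F))).
  { apply valuation_mono; [exact HU|exact (scott_open_family_union F (proj1 HF))|].
    intros x Ux. exists (O (x :: nil)). split; [|exact (Hcover x Ux)].
    exists (x :: nil). split; [intros y [<-|[]]; exact Ux|reflexivity]. }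
  apply NNPP; intro Hnone.
  assert (Hsup : Rbar_le (nu (family_union F)) (Finite r)).
  { apply (valuation_directed_sup_le F _ HF). intros V [L [HL ->]].
    apply Rbar_not_lt_le; intro HrL. apply Hnone; eauto. }
  exact (Rbar_lt_not_le _ _ Hr (Rbar_le_trans _ _ _ HUF Hsup)).
Qed.

Lemma valuation_modular_lower_bound V W (r eps w : R) :
  scott_open le V -> scott_open le W -> nu W = Finite w ->
  Rbar_lt (Finite (r + eps)) (nu (set_union V W)) ->
  Rbar_le (Finite (w - eps)) (nu (set_inter V W)) ->
  Rbar_lt (Finite r) (nu V).
Proof.
  intros HV HW Hw Hunion Hinter.
  pose proof (valuation_modular V W HV HW) as Hmod. rewrite Hw in Hmod.
  pose proof (valuation_ge0 V HV) as HV0.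
  destruct (nu V) as [v| |]; [|exact I|contradiction].
  destruct (nu (set_union V W)) as [a| |], (nu (set_inter V W)) as [b| |];
    simpl in *; try discriminate; try contradiction.
  injection Hmod as Hmod. lra.
Qed.

End Valuation.
End ScottOpen.

Lemma J_le_refl p : J_le p p.
Proof. destruct p as [a [n|]]; left; simpl; auto. Qed.

Lemma J_le_trans p q s : J_le p q -> J_le q s -> J_le p s.
Proof.
  destruct p as [a b], q as [c d], s as [e f]; simpl.
  intros [[-> H1]|[-> H1]] [[-> H2]|[-> H2]]; simpl in *.
  - left; split; auto; destruct b, d, f; simpl in *; auto; try lia; contradiction.
  - right; split; auto; destruct b, d; simpl in *; auto; try lia; contradiction.
  - right; destruct f; simpl in *; [contradiction|auto].
  - contradiction.
Qed.

Lemma J_le_Inf a q : J_le (a, Inf) q -> q = (a, Inf).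
Proof.
  destruct q as [c [n|]]; simpl; intros [[Hac H]|[Hd H]];
    simpl in *; try discriminate; try contradiction.
  subst; reflexivity.
Qed.

Lemma J_le_Fin p c n : J_le p (c, Fin n) -> exists m, p = (c, Fin m) /\ (m <= n)%nat.
Proof.
  destruct p as [a [m|]]; simpl; intros [[-> H]|[H _]]; try discriminate; eauto.
  contradiction.
Qed.

Lemma J_le_Fin_Inf a n c : (n <= c)%nat -> J_le (a, Fin n) (c, Inf).
Proof. intros H; right; split; [reflexivity|exact H]. Qed.

Definition J_column (c : nat) : J -> Prop := fun p => exists n, p = (c, Fin n).

Lemma J_column_directed c : directed_set J_le (J_column c).
Proof.
  split; [exists (c, Fin 0), 0%nat; reflexivity|].
  intros p q [n ->] [m ->]. exists (c, Fin (max n m)).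
  split; [exists (max n m); reflexivity|]. split; left; simpl; split; auto; lia.
Qed.

Lemma J_column_sup c : is_sup J_le (J_column c) (c, Inf).
Proof.
  split; [intros p [n ->]; left; simpl; auto|].
  intros [a [k|]] Hub.
  - destruct (J_le_Fin _ _ _ (Hub (c, Fin (S k)) (ex_intro _ _ eq_refl))) as [m [Heq Hm]].
    injection Heq as _ <-. lia.
  - destruct (Hub (c, Fin (S a)) (ex_intro _ _ eq_refl)) as [[-> _]|[_ Ha]]; simpl in *.
    + left; simpl; auto.
    + lia.
Qed.

Lemma scott_open_J_column U c :
  scott_open J_le U -> U (c, Inf) -> exists n, U (c, Fin n).
Proof.
  intros [_ HU] Uc.
  destruct (HU _ _ (J_column_directed c) (J_column_sup c) Uc) as [p [[n ->] Un]]. eauto.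
Qed.

Lemma J_sup_Fin_mem D c n :
  (exists d, D d) -> is_sup J_le D (c, Fin n) -> D (c, Fin n).
Proof.
  intros [d0 Dd0] [Hub Hleast]. apply NNPP; intro Hn.
  assert (Hbelow : forall d, D d -> exists m, d = (c, Fin m) /\ (m < n)%nat).
  { intros d Dd. destruct (J_le_Fin _ _ _ (Hub d Dd)) as [m [-> Hm]].
    exists m; split; [reflexivity|].
    destruct (Nat.eq_dec m n) as [->|]; [contradiction|lia]. }
  destruct (Hbelow d0 Dd0) as [m0 [_ Hm0]].
  assert (Hpred : J_le (c, Fin n) (c, Fin (n - 1))).
  { apply Hleast. intros d Dd. destruct (Hbelow d Dd) as [m [-> Hm]].
    left; simpl; split; [reflexivity|lia]. }
  destruct (J_le_Fin _ _ _ Hpred) as [m [Heq Hm]]. injection Heq as <-. lia.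
Qed.

Lemma J_directed_in_column D :
  directed_set J_le D -> (forall a, ~ D (a, Inf)) ->
  exists a, forall d, D d -> J_column a d.
Proof.
  intros [[d0 Dd0] Hdir] HnoInf.
  assert (Hfin : forall d, D d -> exists a m, d = (a, Fin m)).
  { intros [a [m|]] Dd; [eauto|exfalso; exact (HnoInf a Dd)]. }
  destruct (Hfin d0 Dd0) as [a [m0 ->]]. exists a. intros d Dd.
  destruct (Hdir _ _ Dd0 Dd) as [z [Dz [H0z Hdz]]].
  destruct (Hfin z Dz) as [b [k ->]].
  destruct (J_le_Fin _ _ _ H0z) as [m' [Heq _]]. injection Heq as <- _.
  destruct (J_le_Fin _ _ _ Hdz) as [m [-> _]]. exists m; reflexivity.
Qed.

Lemma J_sup_Inf D c :
  directed_set J_le D -> is_sup J_le D (c, Inf) ->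
  D (c, Inf) \/ forall k, exists m, (k <= m)%nat /\ D (c, Fin m).
Proof.
  intros HD [Hub Hleast].
  destruct (classic (exists a, D (a, Inf))) as [[a Da]|HnoInf].
  - left.
    assert (Hbound : J_le (c, Inf) (a, Inf)).
    { apply Hleast. intros d Dd.
      destruct (proj2 HD d (a, Inf) Dd Da) as [z [_ [Hdz Haz]]].
      rewrite (J_le_Inf _ _ Haz) in Hdz. exact Hdz. }
    rewrite (J_le_Inf _ _ Hbound) in Da. exact Da.
  - right.
    destruct (J_directed_in_column D HD (fun a Da => HnoInf (ex_intro _ a Da))) as [a Hcol].
    assert (Hc : J_le (c, Inf) (a, Inf)).
    { apply Hleast. intros d Dd. destruct (Hcol d Dd) as [m ->]. left; simpl; auto. }
    injection (J_le_Inf _ _ Hc) as ->.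
    intros k. apply NNPP; intro Hnone.
    assert (Hk : J_le (c, Inf) (c, Fin k)).
    { apply Hleast. intros d Dd. destruct (Hcol d Dd) as [m ->].
      left; simpl; split; [reflexivity|].
      destruct (Compare_dec.le_lt_dec k m); [exfalso; apply Hnone; eauto|lia]. }
    destruct (J_le_Fin _ _ _ Hk) as [m [Heq _]]. discriminate.
Qed.

Lemma scott_open_J_intro U :
  (forall p q, U p -> J_le p q -> U q) ->
  (forall c, U (c, Inf) -> exists n, U (c, Fin n)) ->
  scott_open J_le U.
Proof.
  intros Hup Hcol; split; [exact Hup|].
  intros D [c [n|]] HD Hs Us.
  - exists (c, Fin n); split; [exact (J_sup_Fin_mem D c n (proj1 HD) Hs)|exact Us].
  - destruct (J_sup_Inf D c HD Hs) as [Dc|Hcofinal]; [eauto|].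
    destruct (Hcol c Us) as [k Uk]. destruct (Hcofinal k) as [m [Hkm Dm]].
    exists (c, Fin m); split; [exact Dm|].
    apply (Hup _ _ Uk). left; simpl; split; [reflexivity|exact Hkm].
Qed.

Lemma scott_open_J_Fin_point U p :
  scott_open J_le U -> U p -> exists a n, U (a, Fin n).
Proof.
  intros HU Up. destruct p as [a [n|]]; [eauto|].
  destruct (scott_open_J_column U a HU Up) as [n Un]. eauto.
Qed.

Lemma scott_open_J_meet U V :
  scott_open J_le U -> scott_open J_le V ->
  (exists p, U p) -> (exists q, V q) -> exists z, set_inter U V z.
Proof.
  intros HU HV [p Up] [q Vq].
  destruct (scott_open_J_Fin_point U p HU Up) as [a [n Un]].
  destruct (scott_open_J_Fin_point V q HV Vq) as [b [m Vm]].
  exists (max n m, Inf). split.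
  - apply (proj1 HU _ _ Un), J_le_Fin_Inf. lia.
  - apply (proj1 HV _ _ Vm), J_le_Fin_Inf. lia.
Qed.

Lemma J_column_witnesses U N :
  scott_open J_le U ->
  exists L, (forall p, In p L -> U p) /\
    forall c, (c < N)%nat -> U (c, Inf) -> exists n, In (c, Fin n) L.
Proof.
  intros HU. induction N as [|N [L [HLU HLcol]]].
  - exists nil. split; [intros p []|intros c Hc; lia].
  - destruct (classic (U (N, Inf))) as [UN|UN].
    + destruct (scott_open_J_column U N HU UN) as [n Un].
      exists ((N, Fin n) :: L). split.
      * intros p [<-|Hp]; auto.
      * intros c Hc Uc. destruct (Nat.eq_dec c N) as [->|Hne]; [exists n; left; reflexivity|].
        destruct (HLcol c ltac:(lia) Uc) as [k Hk]. exists k; right; exact Hk.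
    + exists L. split; [exact HLU|].
      intros c Hc Uc. destruct (Nat.eq_dec c N) as [->|Hne]; [contradiction|].
      apply HLcol; [lia|exact Uc].
Qed.

Lemma scott_open_J_union_upset U W L a N :
  scott_open J_le U -> scott_open J_le W -> W (a, Fin N) ->
  (forall p, In p L -> U p) ->
  (forall c, (c < N)%nat -> U (c, Inf) -> exists n, In (c, Fin n) L) ->
  scott_open J_le (set_union W (upset J_le L)).
Proof.
  intros HU HW WN HLU HLcol. apply scott_open_J_intro.
  - intros p q [Wp|[y [Hy Hyp]]] Hpq.
    + left; exact (proj1 HW _ _ Wp Hpq).
    + right; exists y; split; [exact Hy|exact (J_le_trans _ _ _ Hyp Hpq)].
  - intros c [Wc|[y [Hy Hyc]]].
    + destruct (scott_open_J_column W c HW Wc) as [n Wn]. exists n; left; exact Wn.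
    + destruct (Compare_dec.lt_dec c N) as [Hlt|Hge].
      * destruct (HLcol c Hlt (proj1 HU _ _ (HLU y Hy) Hyc)) as [n Hn].
        exists n; right; exists (c, Fin n); split; [exact Hn|apply J_le_refl].
      * (* W contains (a, Fin N), hence (c, Inf) for every c >= N. *)
        assert (Wc : W (c, Inf)) by (apply (proj1 HW _ _ WN), J_le_Fin_Inf; lia).
        destruct (scott_open_J_column W c HW Wc) as [n Wn]. exists n; left; exact Wn.
Qed.

Lemma J_valuation_approx nu U W a N (r : R) :
  continuous_valuation (scott_open J_le) nu ->
  scott_open J_le U -> scott_open J_le W -> W (a, Fin N) ->
  Rbar_lt (Finite r) (nu U) ->
  exists L, (forall p, In p L -> U p) /\
    scott_open J_le (set_union W (upset J_le L)) /\
    Rbar_lt (Finite r) (nu (set_union W (upset J_le L))).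
Proof.
  intros Hnu HU HW WN Hr.
  destruct (J_column_witnesses U N HU) as [X [HXU HXcol]].
  assert (HO : forall A, (forall p, In p A -> U p) ->
            scott_open J_le (set_union W (upset J_le (A ++ X)))).
  { intros A HAU. apply (scott_open_J_union_upset U W _ a N HU HW WN).
    - intros p Hp. apply in_app_or in Hp as [Hp|Hp]; auto.
    - intros c Hc Uc. destruct (HXcol c Hc Uc) as [n Hn].
      exists n. apply in_or_app; right; exact Hn. }
  destruct (valuation_approx_by_lists J_le nu Hnu U
              (fun A => set_union W (upset J_le (A ++ X))) r HU HO) as [A [HAU HAr]].
  - intros A A' HAA' p [Wp|Hp]; [left; exact Wp|right].
    revert Hp; apply upset_incl, incl_app_app; [exact HAA'|apply incl_refl].
  - intros p Up. right; exists p; split; [left; reflexivity|apply J_le_refl].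
  - exact Hr.
  - exists (A ++ X). split; [|split; [exact (HO A HAU)|exact HAr]].
    intros p Hp. apply in_app_or in Hp as [Hp|Hp]; auto.
Qed.

Theorem corollary3p10 (nu : (J -> Prop) -> Rbar) :
  continuous_valuation (scott_open J_le) nu ->
  point_continuous (scott_open J_le) nu.
Proof.
  intros Hnu U r HU Hr HrU.
  destruct (valuation_pos_nonempty J_le nu Hnu U HU (Rbar_le_lt_trans (Finite 0) (Finite r) _ Hr HrU))
    as [x0 Ux0].
  set (P := fun V => scott_open J_le V /\ exists p, V p).
  destruct (classic (exists V, P V /\ nu V <> p_infty)) as [Hfin|Hinf].
  2: { exists (x0 :: nil). split; [intros p [<-|[]]; exact Ux0|].
       intros V HV HVx0. replace (nu V) with p_infty; [exact I|].
       apply NNPP; intro HVfin. apply Hinf. exists V.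
       split; [split; [exact HV|exists x0; apply HVx0; left; reflexivity]|auto]. }
  destruct (Rbar_lt_gap r (nu U) HrU) as [eps [Heps HeU]].
  destruct (exists_near_inf P nu eps Heps
              (fun V HV => valuation_ge0 J_le nu Hnu V (proj1 HV)) Hfin)
    as [W [w [[HW [pw Wpw]] [Hw Hnear]]]].
  destruct (scott_open_J_Fin_point W pw HW Wpw) as [a [N WN]].
  destruct (J_valuation_approx nu U W a N (r + eps) Hnu HU HW WN HeU)
    as [L [HLU [HO HLr]]].
  exists (x0 :: L). split; [intros p [<-|Hp]; auto|].
  intros V HV HVL.
  apply (valuation_modular_lower_bound J_le nu Hnu V W r eps w HV HW Hw).
  - apply (Rbar_lt_le_trans _ _ _ HLr).
    apply (valuation_mono J_le nu Hnu); [exact HO|exact (scott_open_union J_le V W HV HW)|].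
    intros p [Wp|Lp]; [right; exact Wp|left].
    exact (upset_sub J_le L V (proj1 HV) (fun y Hy => HVL y (or_intror Hy)) p Lp).
  - apply Hnear. split; [exact (scott_open_inter J_le V W HV HW)|].
    apply scott_open_J_meet; [exact HV|exact HW|exists x0; apply HVL; left; reflexivity|].
    exists pw; exact Wpw.
Qed.
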